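(* Under the assumptions and with the function $V$ defined as follows, the minimum below exists and $$V(x)=\|x\|+\min_{u\in\mathbb{R}^m}\max_{i\in\Sigma}V(A_ix+B_iu)\quad\text{for all }x\in\mathbb{R}^n.$$ Here the system is assumed IFS$_m$, and $V(x_0)=\inf_{\Psi\in\mathcal{C}_m}\sup_{\sigma\in\Sigma^\omega}\sum_{k=0}^{\infty}\|\phi(k,\sigma,x_0,\Psi)\|$, where $\mathcal{C}_m$ is the set of all functions $\mathcal{H}_-\to\mathbb{R}^m$.
   Context: Let $\Sigma$ be a finite nonempty set and $\{(A_i,B_i)\in\mathbb{R}^{n\times n}\times\mathbb{R}^{n\times m} : i\in\Sigma\}$. Consider $x(k+1)=A_{\sigma(k)}x(k)+B_{\sigma(k)}u(k)$, $k\in\mathbb{N}=\{0,1,\dots\}$, with arbitrary switching signal $\sigma:\mathbb{N}\to\Sigma$ (set of all such: $\Sigma^\omega$). $\|\cdot\|$ is the Euclidean norm. $\mathcal{H}_-$ is the set of all tuples $(x_k,\dots,x_0;\,i_{k-1},\dots,i_0)$ with $k\in\mathbb{N}$, $x_j\in\mathbb{R}^n$, $i_j\in\Sigma$ (mode string empty when $k=0$). For a function $\Psi:\mathcal{H}_-\to\mathbb{R}^m$ (a current-mode-independent controller with memory), $\phi(k,\sigma,x_0,\Psi)$ denotes the closed-loop trajectory defined by $x(0)=x_0$ and $x(k+1)=A_{\sigma(k)}x(k)+B_{\sigma(k)}\Psi(x(k),\dots,x(0);\,\sigma(k-1),\dots,\sigma(0))$. The system is IFS$_m$ if there exists such $\Psi$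 and constants $M>0,\gamma\in[0,1)$ with $\|\phi(k,\sigma,x_0,\Psi)\|\le M\gamma^k\|x_0\|$ for all $x_0\in\mathbb{R}^n,\sigma\in\Sigma^\omega,k\in\mathbb{N}$. *)

From HB Require Import structures.
From mathcomp Require Import all_boot all_order all_algebra.
From mathcomp Require Import all_classical all_reals all_analysis.
Set Implicit Arguments. Unset Strict Implicit. Unset Printing Implicit Defensive.
Import Order.TTheory GRing.Theory Num.Theory.
Local Open Scope ring_scope.

Section Defs.
Variables (R : realType) (Sigma : finType) (n m : nat).
Variables (A : Sigma -> 'M[R]_n) (B : Sigma -> 'M[R]_(n, m)).

Definition vnorm (k : nat) (v : 'cV[R]_k) : R := Num.sqrt (\sum_i v i 0 ^+ 2).

(* A current-mode-independent controller with memory: a function on H_-,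
   i.e. on tuples (x_k,...,x_0 ; i_{k-1},...,i_0), k : nat. *)
Definition controller := forall k : nat, k.+1.-tuple 'cV[R]_n -> k.-tuple Sigma -> 'cV[R]_m.

Definition modes (sigma : nat -> Sigma) (k : nat) : k.-tuple Sigma :=
  [tuple sigma (k - i.+1)%N | i < k].

Fixpoint hist (sigma : nat -> Sigma) (x0 : 'cV[R]_n) (Psi : controller) (k : nat)
  : k.+1.-tuple 'cV[R]_n :=
  match k with
  | 0 => [tuple x0]
  | k'.+1 => let h := hist sigma x0 Psi k' in
      cons_tuple (A (sigma k') *m thead h + B (sigma k') *m Psi k' h (modes sigma k')) h
  end.

Definition phi (k : nat) (sigma : nat -> Sigma) (x0 : 'cV[R]_n) (Psi : controller)
  : 'cV[R]_n := thead (hist sigma x0 Psi k).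

Definition IFS_m : Prop :=
  exists (Psi : controller) (M gamma : R),
    0 < M /\ 0 <= gamma < 1 /\
    forall (x0 : 'cV[R]_n) (sigma : nat -> Sigma) (k : nat),
      vnorm (phi k sigma x0 Psi) <= M * gamma ^+ k * vnorm x0.

Local Open Scope ereal_scope.

Definition cost (x0 : 'cV[R]_n) (Psi : controller) (sigma : nat -> Sigma) : \bar R :=
  \sum_(0 <= k <oo) (vnorm (phi k sigma x0 Psi))%:E.

Definition Vfun (x0 : 'cV[R]_n) : \bar R :=
  ereal_inf [set ereal_sup [set cost x0 Psi sigma | sigma in [set: nat -> Sigma]]
            | Psi in [set: controller]].

Definition maxV (x : 'cV[R]_n) (u : 'cV[R]_m) : \bar R :=
  \big[maxe/-oo]_(i : Sigma) Vfun (A i *m x + B i *m u).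

End Defs.

(* Dynamic programming.  Splitting a closed-loop trajectory after its first step shows that a
   controller whose first control is [u] pays at least [|x| + max_i V (A_i x + B_i u)] against
   the worst switching signal; conversely, applying [u] and then, once the first mode [i] is
   known, a near-optimal controller from [A_i x + B_i u] shows that [V x] is at most that
   quantity for every [u].  It remains to see that [u |-> max_i V (A_i x + B_i u)] attains its
   infimum.  Running two controllers side by side makes [V] subadditive, and IFS_m gives
   [V z <= C |z|]; so [V] is finite and Lipschitz, and so is the function to minimize.  That
   function only depends on the [B_i u], and [V z >= |z|] bounds the [B_i u] on a sublevel
   set; projecting [u] off the common kernel of the [B_i] thus confines the minimization to a
   compact ball. *)

From HB Require Import structures.
From mathcomp Require Import all_boot all_order all_algebra.
From mathcomp Require Import all_classical all_reals all_analysis.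
From mathcomp Require Import zify ring lra.
Import Order.TTheory GRing.Theory Num.Theory numFieldNormedType.Exports.
Set Implicit Arguments. Unset Strict Implicit.
Local Open Scope ring_scope.

Section EuclideanNorm.
Variable R : realType.

Lemma vnorm_ge0 p (v : 'cV[R]_p) : 0 <= vnorm v.
Proof. exact: sqrtr_ge0. Qed.

Lemma vnorm_sqr p (v : 'cV[R]_p) : vnorm v ^+ 2 = \sum_i v i 0 ^+ 2.
Proof. by rewrite /vnorm sqr_sqrtr // sumr_ge0 // => i _; rewrite sqr_ge0. Qed.

Lemma vnorm_sqr_mx p (v : 'cV[R]_p) : vnorm v ^+ 2 = (v^T *m v) 0 0.
Proof. by rewrite vnorm_sqr mxE; apply: eq_bigr => i _; rewrite mxE expr2. Qed.

Lemma vnorm_eq0 p (v : 'cV[R]_p) : vnorm v = 0 -> v = 0.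
Proof.
move=> v0; have : \sum_i v i 0 ^+ 2 = 0 by rewrite -vnorm_sqr v0 expr0n.
move/psumr_eq0P => v2_eq0; apply/matrixP => i j; rewrite (ord1 j) mxE.
by apply/eqP; rewrite -sqrf_eq0 v2_eq0 // => k _; rewrite sqr_ge0.
Qed.

Lemma vnormN p (v : 'cV[R]_p) : vnorm (- v) = vnorm v.
Proof. by rewrite /vnorm; congr Num.sqrt; apply: eq_bigr => i _; rewrite mxE sqrrN. Qed.

Lemma ler_vnorm_dot p (v w : 'cV[R]_p) : \sum_i v i 0 * w i 0 <= vnorm v * vnorm w.
Proof.
have [v0|v0] := eqVneq (vnorm v) 0.
  by rewrite v0 mul0r (vnorm_eq0 v0) big1 // => i _; rewrite mxE mul0r.
have [w0|w0] := eqVneq (vnorm w) 0.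
  by rewrite w0 mulr0 (vnorm_eq0 w0) big1 // => i _; rewrite mxE mulr0.
set P := vnorm v; set Q := vnorm w.
have PQ : 0 < P * Q by rewrite mulr_gt0 // lt0r ?v0 ?w0 ?vnorm_ge0.
(* AM-GM termwise: [2 P Q v_i w_i <= Q^2 v_i^2 + P^2 w_i^2]. *)
suff : 2 * P * Q * (\sum_i v i 0 * w i 0) <= 2 * P ^+ 2 * Q ^+ 2 by nra.
rewrite mulr_sumr.
apply: le_trans (_ : \sum_i (Q ^+ 2 * v i 0 ^+ 2 + P ^+ 2 * w i 0 ^+ 2) <= _).
  by apply: ler_sum => i _; have := sqr_ge0 (Q * v i 0 - P * w i 0); nra.
rewrite big_split /= -!mulr_sumr -!vnorm_sqr -/P -/Q; lra.
Qed.

Lemma ler_vnormD p (v w : 'cV[R]_p) : vnorm (v + w) <= vnorm v + vnorm w.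
Proof.
rewrite -[leRHS]ger0_norm ?addr_ge0 ?vnorm_ge0 // -sqrtr_sqr ler_wsqrtr //.
have -> : (vnorm v + vnorm w) ^+ 2 =
    vnorm v ^+ 2 + 2 * (vnorm v * vnorm w) + vnorm w ^+ 2 by ring.
apply: le_trans (_ : \sum_i v i 0 ^+ 2 + 2 * \sum_i v i 0 * w i 0
                     + \sum_i w i 0 ^+ 2 <= _); last first.
  by rewrite !vnorm_sqr lerD2r lerD2l ler_pM2l ?ler_vnorm_dot.
rewrite mulr_sumr -!big_split /=; apply: ler_sum => i _; rewrite !mxE; nra.
Qed.

Lemma ler_vnorm_sum_abs p (v : 'cV[R]_p) : vnorm v <= \sum_k `|v k 0|.
Proof.
rewrite -[leRHS]ger0_norm ?sumr_ge0 // -sqrtr_sqr ler_wsqrtr //.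
suff [] : 0 <= \sum_k `|v k 0| /\ \sum_i v i 0 ^+ 2 <= (\sum_k `|v k 0|) ^+ 2 by [].
elim/big_rec2 : _ => [|i a b _ [b0 ab]]; first by rewrite expr0n.
split; first by rewrite addr_ge0.
have := normr_ge0 (v i 0); rewrite -[v i 0 ^+ 2]real_normK ?num_real //; nra.
Qed.

Lemma ler_mxnorm_vnorm p (v : 'cV[R]_p) : `|v| <= vnorm v.
Proof.
rewrite [leLHS]mx_normrE; apply/bigmax_leP; split=> [|[k j] _ /=]; first exact: vnorm_ge0.
rewrite (ord1 j) -sqrtr_sqr ler_wsqrtr // (bigD1 k) //= lerDl.
by apply: sumr_ge0 => i _; rewrite sqr_ge0.
Qed.

Lemma mxnorm_trmx p q (M : 'M[R]_(p, q)) : `|M^T| = `|M|.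
Proof.
suff le_tr p' q' (N : 'M[R]_(p', q')) : `|N^T| <= `|N|.
  by apply/le_anti; rewrite le_tr /= -{1}(trmxK M) le_tr.
rewrite [leLHS]mx_normrE; apply/bigmax_leP; split=> // -[k j] _ /=.
rewrite mxE [leRHS]mx_normrE.
exact: (le_bigmax _ (fun ij : 'I_p' * 'I_q' => `|N ij.1 ij.2|) (j, k)).
Qed.

Definition mxsum_abs p q (M : 'M[R]_(p, q)) := \sum_k \sum_j `|M k j|.

Lemma mxsum_abs_ge0 p q (M : 'M[R]_(p, q)) : 0 <= mxsum_abs M.
Proof. by apply: sumr_ge0 => k _; apply: sumr_ge0. Qed.

Lemma ler_vnorm_mulmx p q (M : 'M[R]_(p, q)) (w : 'cV[R]_q) :
  vnorm (M *m w) <= mxsum_abs M * `|w|.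
Proof.
apply: le_trans (ler_vnorm_sum_abs _) _; rewrite mulr_suml.
apply: ler_sum => k _; rewrite mxE mulr_suml.
apply: le_trans (ler_norm_sum _ _ _) _; apply: ler_sum => j _.
rewrite normrM ler_wpM2l // [leRHS]mx_normrE.
exact: (le_bigmax _ (fun ij : 'I_q * 'I_1 => `|w ij.1 ij.2|) (j, 0)).
Qed.

Lemma ler_mxnorm_mulmx p q (M : 'M[R]_(p, q)) (w : 'cV[R]_q) :
  `|M *m w| <= mxsum_abs M * `|w|.
Proof. exact: le_trans (ler_mxnorm_vnorm _) (ler_vnorm_mulmx _ _). Qed.

End EuclideanNorm.

Section LipschitzMinimum.
Variable R : realType.

Lemma lipschitz_continuous (V : normedModType R) (f : V -> R) (L : R) :
  0 <= L -> (forall u u', f u <= f u' + L * `|u - u'|) -> continuous f.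
Proof.
move=> L0 fL u; apply/cvgrPdist_le => e e0.
have d0 : 0 < e / (L + 1) by rewrite divr_gt0 // ltr_wpDl.
near=> t.
have ut : `|u - t| < e / (L + 1).
  by near: t; have := nbhsx_ballx u _ d0; rewrite -ball_normE; apply: filterS.
have Lut : L * `|u - t| <= e.
  apply: le_trans (_ : L * (e / (L + 1)) <= e); first exact: ler_wpM2l (ltW ut).
  rewrite mulrCA -[leRHS]mulr1; apply: ler_wpM2l; first exact: ltW.
  by rewrite ler_pdivrMr ?ltr_wpDl // mul1r lerDl.
have := fL u t; have := fL t u; rewrite distrC => tu ut'.
rewrite ler_norml; apply/andP; split; lra.
Unshelve. all: by end_near.
Qed.

Lemma lipschitz_min_in_ball m (f : 'cV[R]_m -> R) (L r : R) :
    0 <= L -> 0 <= r -> (forall u u', f u <= f u' + L * `|u - u'|) ->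
  exists2 c, `|c| <= r & forall u, `|u| <= r -> f c <= f u.
Proof.
move=> L0 r0 fL.
(* The library proves bounded closed sets compact for row vectors only, hence the transposition. *)
pose g (w : 'rV[R]_m) := f w^T.
have g_cont : continuous g.
  apply: (lipschitz_continuous L0) => w w'.
  by rewrite /g -mxnorm_trmx linearB; apply: fL.
pose K := closed_ball_ Num.norm (0 : 'rV[R]_m) r.
have inK w : (w \in K) = (`|w| <= r).
  apply/idP/idP => [/set_mem|wr]; last apply/mem_set;
    by rewrite /K /closed_ball_ /= sub0r normrN.
have K0 : (K !=set0)%classic.
  by exists 0; apply/set_mem; rewrite inK normr0.
have K_compact : compact K.
  apply: bounded_closed_compact; last exact: closed_closed_ball_.
  exists r; split; first exact: num_real.
  move=> M rM w Kw; have := mem_set Kw; rewrite inK => wr.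
  exact: le_trans wr (ltW rM).
have [c cK c_min] := EVT_min_rV K0 K_compact (continuous_subspaceT g_cont).
exists c^T; first by rewrite mxnorm_trmx -inK.
by move=> u ur; have := c_min u^T; rewrite inK mxnorm_trmx /g trmxK; apply.
Qed.

End LipschitzMinimum.

Section CommonKernelProjection.
Variables (R : realType) (I : finType) (p q : nat) (B : I -> 'M[R]_(p, q)).

Definition gram := \sum_i (B i)^T *m B i.

Definition kerproj (u : 'cV[R]_q) := (pinvmx gram)^T *m (gram *m u).

Lemma trmx_gram : gram^T = gram.
Proof. by rewrite /gram linear_sum; apply: eq_bigr => i _ /=; rewrite trmx_mul trmxK. Qed.

Lemma gram_kerproj u : gram *m kerproj u = gram *m u.
Proof.
(* [(kerproj u)^T = u^T *m gram *m pinvmx gram], and [u^T *m gram] lies in the row space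
   of [gram]. *)
apply: trmx_inj; rewrite trmx_mul [RHS]trmx_mul trmx_gram.
rewrite /kerproj trmx_mul trmxK trmx_mul trmx_gram.
by rewrite mulmxKpV // submxMl.
Qed.

Lemma gram_quad d : (d^T *m (gram *m d)) 0 0 = \sum_i vnorm (B i *m d) ^+ 2.
Proof.
rewrite /gram mulmx_suml mulmx_sumr summxE; apply: eq_bigr => i _.
by rewrite vnorm_sqr_mx trmx_mul !mulmxA.
Qed.

Lemma mulmx_kerproj i u : B i *m kerproj u = B i *m u.
Proof.
apply/eqP; rewrite -subr_eq0 -mulmxBr; apply/eqP.
set d := kerproj u - u.
have gram_d : gram *m d = 0 by rewrite mulmxBr gram_kerproj subrr.
have : \sum_j vnorm (B j *m d) ^+ 2 = 0 by rewrite -gram_quad gram_d mulmx0 mxE.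
move/psumr_eq0P => /(_ (fun j _ => sqr_ge0 _) i isT) /eqP.
by rewrite sqrf_eq0 => /eqP /vnorm_eq0.
Qed.

Lemma ler_mxnorm_kerproj u : `|kerproj u| <=
  mxsum_abs (pinvmx gram)^T * \sum_i mxsum_abs (B i)^T * vnorm (B i *m u).
Proof.
apply: le_trans (ler_mxnorm_mulmx _ _) _; rewrite ler_wpM2l ?mxsum_abs_ge0 //.
rewrite /gram mulmx_suml; apply: le_trans (ler_norm_sum _ _ _) _.
apply: ler_sum => i _; rewrite -mulmxA; apply: le_trans (ler_mxnorm_mulmx _ _) _.
by rewrite ler_wpM2l ?mxsum_abs_ge0 ?ler_mxnorm_vnorm.
Qed.

End CommonKernelProjection.

Section TupleLast.
Variables (T : Type) (k : nat).

Definition tlast (t : k.+1.-tuple T) : T := tnth t ord_max.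

Definition tbelast (t : k.+1.-tuple T) : k.-tuple T :=
  [tuple tnth t (widen_ord (leqnSn k) j) | j < k].

Lemma tlast_rcons (t : k.-tuple T) x : tlast (rcons_tuple t x) = x.
Proof. by rewrite /tlast (tnth_nth x) /= nth_rcons size_tuple ltnn eqxx. Qed.

Lemma tbelast_rcons (t : k.-tuple T) x : tbelast (rcons_tuple t x) = t.
Proof.
apply: eq_from_tnth => j; rewrite tnth_mktuple (tnth_nth x) /=.
by rewrite nth_rcons size_tuple ltn_ord -tnth_nth.
Qed.

Lemma val_rcons_tuple (t : k.-tuple T) x : val (rcons_tuple t x) = rcons t x.
Proof. by []. Qed.

Lemma thead_rcons (t : k.+1.-tuple T) x : thead (rcons_tuple t x) = thead t.
Proof. by case: t => -[|a l]. Qed.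

End TupleLast.

Section ClosedLoop.
Variables (R : realType) (Sigma : finType) (n m : nat).
Variables (A : Sigma -> 'M[R]_n) (B : Sigma -> 'M[R]_(n, m)).
Local Notation controller := (controller R Sigma n m).
Local Notation hist := (hist A B).
Local Notation phi := (phi A B).
Local Notation cost := (cost A B).
Local Notation Vfun := (Vfun A B).
Local Notation maxV := (maxV A B).

Definition scons (i : Sigma) (s : nat -> Sigma) : nat -> Sigma :=
  fun j => if j is j'.+1 then s j' else i.

Lemma scons_eta (s : nat -> Sigma) : s = scons (s 0%N) (fun j => s j.+1).
Proof. by apply/funext => -[|j]. Qed.

Lemma modes0 (s : nat -> Sigma) : modes s 0 = [tuple].
Proof. exact: tuple0. Qed.

Lemma val_modes (s : nat -> Sigma) k :
  val (modes s k) = [seq s (k - j.+1)%N | j <- iota 0 k].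
Proof. by rewrite /= -val_enum_ord -map_comp. Qed.

Lemma modes_scons i s k : modes (scons i s) k.+1 = rcons_tuple (modes s k) i.
Proof.
apply: val_inj; rewrite (val_modes (scons i s) k.+1) val_rcons_tuple val_modes.
rewrite -addn1 iotaD map_cat /= add0n addn1 subSS subnn cats1; congr rcons.
apply/eq_in_map => j; rewrite mem_iota add0n subSS => /andP[_ jk].
by case E: (k - j)%N => [|l] /=; [lia | congr s; lia].
Qed.

Lemma histS s x (Psi : controller) k :
  hist s x Psi k.+1 = cons_tuple (A (s k) *m thead (hist s x Psi k)
      + B (s k) *m Psi k (hist s x Psi k) (modes s k)) (hist s x Psi k).
Proof. by []. Qed.

Lemma phiS s x (Psi : controller) k : phi k.+1 s x Psi =
  A (s k) *m phi k s x Psi + B (s k) *m Psi k (hist s x Psi k) (modes s k).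
Proof. by []. Qed.

(* Histories are stored newest first, so the initial state and mode go at the end. *)
Definition shift_ctrl (Psi : controller) x i : controller :=
  fun k h t => Psi k.+1 (rcons_tuple h x) (rcons_tuple t i).

Definition first_step (Psi : controller) x i := A i *m x + B i *m Psi 0%N [tuple x] [tuple].

Lemma hist_scons (Psi : controller) i s x k :
  hist (scons i s) x Psi k.+1 =
  rcons_tuple (hist s (first_step Psi x i) (shift_ctrl Psi x i) k) x.
Proof.
elim: k => [|k IH]; first by apply: val_inj; rewrite /= modes0.
by rewrite histS IH modes_scons thead_rcons; apply: val_inj.
Qed.

Lemma phi_scons (Psi : controller) i s x k :
  phi k.+1 (scons i s) x Psi = phi k s (first_step Psi x i) (shift_ctrl Psi x i).
Proof. by rewrite /phi hist_scons thead_rcons. Qed.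

Local Open Scope ereal_scope.

Lemma cost_ge0 x Psi s : 0 <= cost x Psi s.
Proof. by apply: nneseries_ge0 => k _ _; rewrite lee_fin vnorm_ge0. Qed.

Lemma cost_scons (Psi : controller) i s x :
  cost x Psi (scons i s) =
  (vnorm x)%:E + cost (first_step Psi x i) (shift_ctrl Psi x i) s.
Proof.
rewrite /cost nneseries_recl => [|k _|//]; last by rewrite lee_fin vnorm_ge0.
congr (_ + _).
rewrite -nneseries_addn => [|k]; last by rewrite lee_fin vnorm_ge0.
by apply: eq_eseriesr => k _; rewrite addn1 phi_scons.
Qed.

Definition sup_cost x (Psi : controller) :=
  ereal_sup [set cost x Psi s | s in [set: nat -> Sigma]].

Lemma Vfun_le_sup_cost x Psi : Vfun x <= sup_cost x Psi.
Proof. by apply: ereal_inf_lbound; exists Psi. Qed.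

Lemma Vfun_ge0 (i0 : Sigma) x : 0 <= Vfun x.
Proof.
apply: le_ereal_inf_tmp => _ [Psi _ <-].
apply: le_trans (cost_ge0 x Psi (fun=> i0)) _.
by apply: ereal_sup_ubound; exists (fun=> i0).
Qed.

Lemma sup_cost_ge x (Psi : controller) :
  (vnorm x)%:E + maxV x (Psi 0%N [tuple x] [tuple]) <= sup_cost x Psi.
Proof.
rewrite -leeBrDl // /maxV; apply: bigmax_le => [|i _]; first exact: leNye.
apply: le_trans (Vfun_le_sup_cost _ (shift_ctrl Psi x i)) _.
apply: ge_ereal_sup => _ [s _ <-]; rewrite leeBrDl // -cost_scons.
by apply: ereal_sup_ubound; exists (scons i s).
Qed.

Lemma Vfun_ge_min x ustar : (forall u, maxV x ustar <= maxV x u) ->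
  (vnorm x)%:E + maxV x ustar <= Vfun x.
Proof.
move=> ustar_min; apply: le_ereal_inf_tmp => _ [Psi _ <-].
by apply: le_trans (sup_cost_ge x Psi); rewrite leeD2l.
Qed.

(* [tlast t] is the first mode [sigma 0], and [tbelast] forgets the first step. *)
Definition glue_ctrl u (Pf : Sigma -> controller) : controller := fun k =>
  match k return k.+1.-tuple 'cV[R]_n -> k.-tuple Sigma -> 'cV[R]_m with
  | 0 => fun _ _ => u
  | k'.+1 => fun h t => Pf (tlast t) k' (tbelast h) (tbelast t)
  end.

Lemma shift_glue_ctrl u Pf x i : shift_ctrl (glue_ctrl u Pf) x i = Pf i.
Proof.
apply: functional_extensionality_dep => k; apply/funext => h; apply/funext => t.
by rewrite /shift_ctrl /= tlast_rcons !tbelast_rcons.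
Qed.

Lemma Vfun_le (i0 : Sigma) x u : Vfun x <= (vnorm x)%:E + maxV x u.
Proof.
have [->|maxV_fin] := eqVneq (maxV x u) +oo; first by rewrite addey ?leey.
pose y i := (A i *m x + B i *m u)%R.
have Vy_le i : Vfun (y i) <= maxV x u.
  exact: (le_bigmax _ (fun i => Vfun (y i)) i).
have Vy_fin i : Vfun (y i) \is a fin_num.
  by rewrite ge0_fin_numE ?(Vfun_ge0 i0) // (le_lt_trans (Vy_le i)) ?ltey.
apply/lee_addgt0Pr => e e0.
have /choice[Pf Pf_opt] i : exists Psi, sup_cost (y i) Psi < Vfun (y i) + e%:E.
  by have [_ [Psi _ <-] ?] := lb_ereal_inf_adherent e0 (Vy_fin i); exists Psi.
apply: le_trans (Vfun_le_sup_cost x (glue_ctrl u Pf)) _.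
apply: ge_ereal_sup => _ [s _ <-].
rewrite (scons_eta s) cost_scons shift_glue_ctrl -addeA leeD2l //.
apply: le_trans (_ : sup_cost (y (s 0%N)) (Pf (s 0%N)) <= _).
  by apply: ereal_sup_ubound; exists (fun j => s j.+1).
by apply: le_trans (ltW (Pf_opt _)) _; rewrite leeD2r.
Qed.

Local Close Scope ereal_scope.

(* [t] lists [sigma (k-1), ..., sigma 0]; [i0] pads the signal from time [k] on. *)
Definition signal_of_modes (i0 : Sigma) k (t : k.-tuple Sigma) : nat -> Sigma :=
  fun j => nth i0 t (k - j.+1).

Lemma signal_of_modesE i0 s k j : (j < k)%N -> signal_of_modes i0 (modes s k) j = s j.
Proof.
move=> jk; rewrite /signal_of_modes -[nth _ _ _]/(nth i0 (val (modes s k)) _).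
by rewrite val_modes (nth_map 0%N) ?size_iota ?nth_iota; first congr s; lia.
Qed.

Lemma eq_hist s s' x (Psi : controller) k :
  (forall j, (j < k)%N -> s j = s' j) -> hist s x Psi k = hist s' x Psi k.
Proof.
elim: k => [//|k IH] ss'; rewrite !histS IH => [|j jk]; last by apply: ss'; lia.
have -> : modes s k = modes s' k.
  by apply: eq_from_tnth => j; rewrite !tnth_mktuple ss' //; lia.
by rewrite ss'.
Qed.

(* Ignores its own state history: it re-simulates [P1] from [a] and [P2] from [b] under the
   observed modes and adds their controls, so by linearity its trajectory from [a + b] is the
   sum of theirs. *)
Definition add_ctrl i0 a b (P1 P2 : controller) : controller := fun k _ t =>
  P1 k (hist (signal_of_modes i0 t) a P1 k) t + P2 k (hist (signal_of_modes i0 t) b P2 k) t.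

Lemma phi_add_ctrl i0 a b P1 P2 s k :
  phi k s (a + b) (add_ctrl i0 a b P1 P2) = phi k s a P1 + phi k s b P2.
Proof.
elim: k => [//|k IH]; rewrite !phiS IH /add_ctrl.
rewrite !(@eq_hist (signal_of_modes i0 (modes s k)) s) => [|j jk|j jk];
  try exact: signal_of_modesE.
by rewrite !mulmxDr addrACA.
Qed.

Local Open Scope ereal_scope.

Lemma sup_cost_add_ctrl i0 a b P1 P2 :
  sup_cost (a + b) (add_ctrl i0 a b P1 P2) <= sup_cost a P1 + sup_cost b P2.
Proof.
apply: ge_ereal_sup => _ [s _ <-].
apply: (@le_trans _ _ (cost a P1 s + cost b P2 s)).
  rewrite /cost -nneseriesD => [|k _ _|k _ _]; try by rewrite lee_fin vnorm_ge0.
  apply: lee_nneseries => [k _ _|k _]; first by rewrite lee_fin vnorm_ge0.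
  by rewrite phi_add_ctrl -EFinD lee_fin ler_vnormD.
by apply: leeD; apply: ereal_sup_ubound; exists s.
Qed.

Lemma IFS_sup_cost_le : IFS_m A B ->
  exists (Psi : controller) (C : R), (0 <= C)%R /\
    forall z, sup_cost z Psi <= (C * vnorm z)%:E.
Proof.
move=> [Psi [M [g [M0 [/andP[g0 g1] decay]]]]].
exists Psi, (M / (1 - g))%R; split; first by rewrite divr_ge0 ?subr_ge0 ?ltW.
move=> z; apply: ge_ereal_sup => _ [s _ <-].
have geom_ge0 k : (0 <= geometric (M * vnorm z) g k)%R.
  by apply: geometric_ge0; [rewrite mulr_ge0 ?vnorm_ge0 // ltW | exact: g0].
apply: (@le_trans _ _ (\sum_(0 <= k <oo) (geometric (M * vnorm z) g k)%:E)).
  apply: lee_nneseries => [k _ _|k _]; first by rewrite lee_fin vnorm_ge0.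
  by rewrite lee_fin /geometric /= mulrAC decay.
apply: lime_le; first by apply: is_cvg_nneseries => k _ _; rewrite lee_fin.
apply: nearW => N; rewrite sumEFin lee_fin.
rewrite -[leLHS]/(series (geometric (M * vnorm z) g) N) geometric_seriesE ?lt_eqF //=.
rewrite [leRHS]mulrAC ler_wpM2r ?invr_ge0 ?subr_ge0 ?(ltW g1) //.
by rewrite ler_piMr ?mulr_ge0 ?vnorm_ge0 ?(ltW M0) // lerBlDr lerDl exprn_ge0.
Qed.

Lemma Vfun_addr_le (i0 : Sigma) : IFS_m A B -> exists C : R, (0 <= C)%R /\
  forall b d, Vfun (b + d) <= Vfun b + (C * vnorm d)%:E.
Proof.
move=> /IFS_sup_cost_le[P0 [C [C0 P0_le]]]; exists C; split => // b d.
rewrite -leeBlDr //; apply: le_ereal_inf_tmp => _ [P1 _ <-]; rewrite leeBlDr //.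
apply: le_trans (Vfun_le_sup_cost _ (add_ctrl i0 b d P1 P0)) _.
by apply: le_trans (sup_cost_add_ctrl _ _ _ _ _) _; rewrite leeD2l.
Qed.

End ClosedLoop.

Section Minimizer.
Variables (R : realType) (Sigma : finType) (n m : nat).
Variables (A : Sigma -> 'M[R]_n) (B : Sigma -> 'M[R]_(n, m)).
Variable i0 : Sigma.
Hypothesis hIFS : IFS_m A B.
Local Notation Vfun := (Vfun A B).

Lemma Vfun_fin_num z : Vfun z \is a fin_num.
Proof.
have [Psi [C [_ Psi_le]]] := IFS_sup_cost_le hIFS.
rewrite ge0_fin_numE ?(Vfun_ge0 _ _ i0) //.
apply: le_lt_trans (Vfun_le_sup_cost A B z Psi) _.
by apply: le_lt_trans (Psi_le z) _; rewrite ltry.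
Qed.

Definition Vr z := fine (Vfun z).

Lemma VfunE z : Vfun z = (Vr z)%:E.
Proof. by rewrite fineK ?Vfun_fin_num. Qed.

Lemma Vr_ge0 z : 0 <= Vr z.
Proof. by rewrite -lee_fin -VfunE (Vfun_ge0 _ _ i0). Qed.

Lemma vnorm_le_Vr z : vnorm z <= Vr z.
Proof.
rewrite -lee_fin -VfunE; apply: le_ereal_inf_tmp => _ [Psi _ <-].
apply: le_trans (sup_cost_ge A B z Psi); rewrite leeDl //.
apply: le_trans (Vfun_ge0 A B i0 (first_step A B Psi z i0)) _.
exact: (le_bigmax _ (fun i => Vfun (first_step A B Psi z i)) i0).
Qed.

Lemma Vr_lipschitz : exists C, 0 <= C /\ forall a b, Vr a <= Vr b + C * vnorm (a - b).
Proof.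
have [C [C0 V_le]] := Vfun_addr_le i0 hIFS; exists C; split => // a b.
by have := V_le b (a - b); rewrite addrC subrK !VfunE -EFinD lee_fin.
Qed.

Variable x : 'cV[R]_n.

Definition maxVr u := \big[Num.max/0]_i Vr (A i *m x + B i *m u).

Lemma Vr_le_maxVr u i : Vr (A i *m x + B i *m u) <= maxVr u.
Proof. exact: (le_bigmax _ (fun i => Vr (A i *m x + B i *m u)) i). Qed.

Lemma maxVE u : maxV A B x u = (maxVr u)%:E.
Proof.
rewrite /maxV /maxVr -EFin_bigmax; under eq_bigr do rewrite VfunE.
set y := (fun i => A i *m x + B i *m u).
have le_max e j : ((Vr (y j))%:E <= \big[Order.max/e]_i (Vr (y i))%:E)%E.
  exact: (le_bigmax _ (fun i => (Vr (y i))%:E) j).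
apply/le_anti/andP; split.
  by apply: bigmax_le => [|i _]; [exact: leNye | exact: le_max].
apply: bigmax_le => [|i _]; last exact: le_max.
by apply: le_trans (le_max _ i0); rewrite lee_fin Vr_ge0.
Qed.

Lemma maxVr_lipschitz : exists L, 0 <= L /\ forall u u', maxVr u <= maxVr u' + L * `|u - u'|.
Proof.
have [C [C0 Vr_le]] := Vr_lipschitz.
have KB0 : 0 <= \sum_i mxsum_abs (B i) by apply: sumr_ge0 => i _; apply: mxsum_abs_ge0.
exists (C * \sum_i mxsum_abs (B i)); split => [|u u']; first exact: mulr_ge0.
apply: bigmax_le => [|i _]; first by rewrite addr_ge0 ?mulr_ge0 // bigmax_ge_id.
apply: le_trans (Vr_le _ (A i *m x + B i *m u')) _.
rewrite opprD addrACA subrr add0r -mulmxBr -mulrA lerD ?Vr_le_maxVr ?ler_wpM2l //.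
apply: le_trans (ler_vnorm_mulmx _ _) _; rewrite ler_wpM2r //.
by rewrite (bigD1 i) //= lerDl sumr_ge0 // => j _; apply: mxsum_abs_ge0.
Qed.

Lemma maxVr_kerproj u : maxVr (kerproj B u) = maxVr u.
Proof. by apply: eq_bigr => i _; rewrite mulmx_kerproj. Qed.

Lemma vnorm_mulmx_le_maxVr u i : vnorm (B i *m u) <= maxVr u + vnorm (A i *m x).
Proof.
have -> : B i *m u = (A i *m x + B i *m u) + - (A i *m x) by rewrite addrC addKr.
apply: le_trans (ler_vnormD _ _) _; rewrite vnormN lerD2r.
exact: le_trans (vnorm_le_Vr _) (Vr_le_maxVr _ _).
Qed.

Lemma maxVr_min : exists ustar, forall u, maxVr ustar <= maxVr u.
Proof.
have [L [L0 maxVr_le]] := maxVr_lipschitz.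
pose rho := mxsum_abs (pinvmx (gram B))^T *
  \sum_i mxsum_abs (B i)^T * (maxVr 0 + vnorm (A i *m x)).
have rho0 : 0 <= rho.
  rewrite mulr_ge0 ?mxsum_abs_ge0 // sumr_ge0 // => i _.
  by rewrite mulr_ge0 ?mxsum_abs_ge0 ?addr_ge0 ?vnorm_ge0 ?bigmax_ge_id.
have [c _ c_min] := lipschitz_min_in_ball L0 rho0 maxVr_le.
have c_le0 : maxVr c <= maxVr 0 by apply: (c_min 0); rewrite normr0.
exists c => u; case/orP: (le_total (maxVr u) (maxVr 0)) => [u_le0|]; last first.
  exact: le_trans c_le0.
rewrite -(maxVr_kerproj u); apply: (c_min (kerproj B u)).
apply: le_trans (ler_mxnorm_kerproj _ _) _.
apply: ler_wpM2l; first exact: mxsum_abs_ge0.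
apply: ler_sum => i _; apply: ler_wpM2l; first exact: mxsum_abs_ge0.
by apply: le_trans (vnorm_mulmx_le_maxVr u i) _; rewrite lerD2r.
Qed.

End Minimizer.

Unset Implicit Arguments.
Set Strict Implicit.

Theorem mainTheorem4 (R : realType) (Sigma : finType) (n m : nat)
  (A : Sigma -> 'M[R]_n) (B : Sigma -> 'M[R]_(n, m))
  (hSigma : (0 < #|Sigma|)%N)
  (hIFS : IFS_m A B) :
  forall x : 'cV[R]_n,
    exists ustar : 'cV[R]_m,
      (forall u : 'cV[R]_m, (maxV A B x ustar <= maxV A B x u)%E) /\
      Vfun A B x = ((vnorm x)%:E + maxV A B x ustar)%E.
Proof.
move=> x; have [i0 _] := card_gt0P hSigma.
have [ustar ustar_min] := maxVr_min i0 hIFS x.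
have maxV_min u : (maxV A B x ustar <= maxV A B x u)%E.
  by rewrite !(maxVE i0 hIFS) lee_fin.
exists ustar; split => //.
by apply/le_anti/andP; split; [exact: Vfun_le | exact: Vfun_ge_min].
Qed.
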